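(* Every surjective $\boxplus$-morphism $\phi:[1]^m\to[1]^n$ has a section in $\boxplus$, i.e. there is a $\boxplus$-morphism $s:[1]^n\to[1]^m$ with $\phi\circ s$ the identity.
   Context: $[1]=\{0<1\}$, $[1]^n$ the product poset ($[1]^0=[0]$). An interval in a poset is a non-empty subset $[x,z]=\{y:x\leq y\leq z\}$. $\boxplus$ is the category whose objects are the $[1]^n$ ($n\geq0$) and whose morphisms are the monotone functions mapping every interval onto an interval. *)

From mathcomp Require Import all_boot.
Set Implicit Arguments. Unset Strict Implicit. Unset Printing Implicit Defensive.

(* [1]^n : the product poset of n copies of [1] = {0<1}, encoded as
   boolean vectors indexed by 'I_n (false = 0, true = 1). [1]^0 = [0]. *)
Definition cube (n : nat) := {ffun 'I_n -> bool}.

Definition cube_le (n : nat) (x y : cube n) : bool := [forall i, x i ==> y i].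

Definition cube_interval (n : nat) (x z : cube n) : {set cube n} :=
  [set y | cube_le x y && cube_le y z].

Definition monotone_cube (m n : nat) (f : cube m -> cube n) : Prop :=
  forall x y, cube_le x y -> cube_le (f x) (f y).

(* morphisms of the category boxplus: monotone maps sending every interval
   onto an interval *)
Definition box_morphism (m n : nat) (f : cube m -> cube n) : Prop :=
  monotone_cube f /\
  forall x z : cube m, cube_le x z ->
    exists a b : cube n, cube_le a b /\ f @: cube_interval x z = cube_interval a b.

From mathcomp Require Import all_boot.
Set Implicit Arguments. Unset Strict Implicit. Unset Printing Implicit Defensive.

(* Let x be a maximal element of the fibre of 0 under phi.  Since phi maps the
   interval [x, 1] onto [0, 1] and, by maximality of x, sends no atom of
   [x, 1] to 0, each atom e_j of [1]^n is the image of some atom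
   x + e_(sg j) of [x, 1], and sg is injective.  The face map
   s y = x + sum_(y_j = 1) e_(sg j) is a box morphism with y <= phi (s y).
   Moreover phi maps s [0, y] = [x, s y] onto [0, phi (s y)], so this interval
   has at most as many elements as [0, y], which forces phi (s y) = y. *)

Definition cube_bot n : cube n := [ffun _ => false].
Definition cube_top n : cube n := [ffun _ => true].
Definition cube_atom n (j : 'I_n) : cube n := [ffun t => t == j].
Definition cube_setU1 n (x : cube n) (i : 'I_n) : cube n := [ffun t => x t || (t == i)].
Arguments cube_bot {n}.
Arguments cube_top {n}.

Section CubeOrder.

Variable n : nat.
Implicit Types x y z : cube n.

Lemma cube_leP x y : reflect (forall i, x i -> y i) (cube_le x y).
Proof.
apply: (iffP forallP) => le_xy i; first exact: implyP.
exact/implyP/le_xy.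
Qed.

Lemma cube_le_refl x : cube_le x x.
Proof. exact/cube_leP. Qed.

Lemma cube_le_trans y x z : cube_le x y -> cube_le y z -> cube_le x z.
Proof. by move=> /cube_leP le_xy /cube_leP le_yz; apply/cube_leP => i /le_xy/le_yz. Qed.

Lemma cube_le_anti x y : cube_le x y -> cube_le y x -> x = y.
Proof.
move=> /cube_leP le_xy /cube_leP le_yx; apply/ffunP => i.
by apply/idP/idP => [/le_xy | /le_yx].
Qed.

Lemma cube_bot_le x : cube_le cube_bot x.
Proof. by apply/cube_leP => i; rewrite ffunE. Qed.

Lemma cube_le_top x : cube_le x cube_top.
Proof. by apply/cube_leP => i; rewrite ffunE. Qed.

Lemma cube_atom_le j x : cube_le (cube_atom j) x = x j.
Proof.
apply/cube_leP/idP => [le_jx | xj i]; first by apply: le_jx; rewrite ffunE.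
by rewrite ffunE => /eqP ->.
Qed.

Lemma cube_le_atom x j :
  cube_le x (cube_atom j) -> x = cube_bot \/ x = cube_atom j.
Proof.
move=> /cube_leP le_x_j; case xj: (x j); [right | left]; apply/ffunP => t.
  rewrite ffunE; case: eqP => [-> // | ne_tj].
  by apply/negbTE/negP => /le_x_j; rewrite ffunE => /eqP.
rewrite ffunE; apply/negbTE/negP => xt.
by have := le_x_j t xt; rewrite ffunE => /eqP eq_tj; rewrite -eq_tj xt in xj.
Qed.

Lemma cube_atom_inj : injective (@cube_atom n).
Proof. by move=> j k /ffunP /(_ j); rewrite !ffunE eqxx => /esym/eqP. Qed.

Lemma cube_setU1_le x i z : cube_le x z -> z i -> cube_le (cube_setU1 x i) z.
Proof.
move=> /cube_leP le_xz zi; apply/cube_leP => t; rewrite ffunE.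
by case/orP => [/le_xz | /eqP ->].
Qed.

Lemma card_cube_setU1 x i :
  ~~ x i -> #|[pred t | x t]| < #|[pred t | cube_setU1 x i t]|.
Proof.
move=> xNi; apply/proper_card/properP; split.
  by apply/subsetP => t; rewrite !inE ffunE => ->.
by exists i; rewrite !inE ?ffunE ?eqxx ?orbT.
Qed.

Lemma cube_le_card_interval_eq y z :
  cube_le y z -> #|cube_interval cube_bot z| <= #|cube_interval cube_bot y| -> z = y.
Proof.
move=> le_yz card_zy.
have sub_yz : cube_interval cube_bot y \subset cube_interval cube_bot z.
  apply/subsetP => w; rewrite !inE cube_bot_le /= => le_wy.
  exact: cube_le_trans le_yz.
have /eqP eq_yz : cube_interval cube_bot y == cube_interval cube_bot z.
  by rewrite eqEcard sub_yz card_zy.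
have : z \in cube_interval cube_bot y by rewrite eq_yz inE cube_bot_le cube_le_refl.
by rewrite inE => /andP [_ le_zy]; apply: cube_le_anti.
Qed.

End CubeOrder.

Lemma box_morphism_interval m n (f : cube m -> cube n) x z :
  box_morphism f -> cube_le x z ->
  f @: cube_interval x z = cube_interval (f x) (f z).
Proof.
move=> [f_mono f_int] le_xz; have [a [b [le_ab f_xz]]] := f_int x z le_xz.
have x_in : x \in cube_interval x z by rewrite inE cube_le_refl le_xz.
have z_in : z \in cube_interval x z by rewrite inE cube_le_refl le_xz.
have /imsetP [wa] : a \in f @: cube_interval x z by rewrite f_xz inE cube_le_refl le_ab.
have /imsetP [wb] : b \in f @: cube_interval x z by rewrite f_xz inE cube_le_refl le_ab.
rewrite !inE => /andP [_ le_wb_z] eq_b /andP [le_x_wa _] eq_a.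
move: (imset_f f x_in) (imset_f f z_in); rewrite f_xz !inE.
move=> /andP [le_a_fx _] /andP [_ le_fz_b].
have -> : a = f x by apply: cube_le_anti => //; rewrite eq_a; apply: f_mono.
by have -> : b = f z by apply: cube_le_anti => //; rewrite eq_b; apply: f_mono.
Qed.

Definition face m n (x : cube m) (sg : 'I_n -> 'I_m) (y : cube n) : cube m :=
  [ffun i => x i || [exists j, (sg j == i) && y j]].

Section Face.

Variables (m n : nat) (x : cube m) (sg : 'I_n -> 'I_m).
Hypotheses (sg_inj : injective sg) (x_sg : forall j, ~~ x (sg j)).
Local Notation face := (face x sg).

Lemma face_sg y j : face y (sg j) = y j.
Proof.
rewrite ffunE (negbTE (x_sg j)) /=.
apply/existsP/idP => [[k /andP [/eqP /sg_inj -> //]] | yj].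
by exists j; rewrite eqxx.
Qed.

Lemma face_out y i : (forall j, sg j != i) -> face y i = x i.
Proof.
move=> sgNi; rewrite ffunE; case: (x i) => //=.
by apply/existsP => [[j /andP [sg_j _]]]; have := sgNi j; rewrite sg_j.
Qed.

Lemma face_mono : monotone_cube face.
Proof.
move=> y y' /cube_leP le_yy'; apply/cube_leP => i; rewrite !ffunE.
case/orP => [-> // | /existsP [j /andP [sg_j yj]]].
by apply/orP; right; apply/existsP; exists j; rewrite sg_j le_yy'.
Qed.

Lemma face_bot : face cube_bot = x.
Proof.
apply/ffunP => i; rewrite ffunE.
by case: (x i) => //=; apply/existsP => [[j]]; rewrite ffunE andbF.
Qed.

Lemma le_face y : cube_le x (face y).
Proof. by apply/cube_leP => i xi; rewrite ffunE xi. Qed.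

Lemma face_interval y y' :
  face @: cube_interval y y' = cube_interval (face y) (face y').
Proof.
apply/setP => w; rewrite inE; apply/imsetP/andP => [[t] | [le_w le_w']].
  by rewrite inE => /andP [le_yt le_ty'] ->; split; apply: face_mono.
exists [ffun j => w (sg j)].
  rewrite inE; apply/andP; split; apply/cube_leP => j; rewrite ffunE.
    by rewrite -(face_sg y) => /(cube_leP _ _ le_w).
  by move=> /(cube_leP _ _ le_w'); rewrite face_sg.
apply/ffunP => i; case: (pickP [pred j | sg j == i]) => [j /eqP <- | sgNi].
  by rewrite face_sg ffunE.
have sgNi' j : sg j != i by have := sgNi j => /= ->.
rewrite face_out //; apply/idP/idP => [wi | xi].
  by have := cube_leP _ _ le_w' i wi; rewrite face_out.
exact/(cube_leP _ _ le_w)/(cube_leP _ _ (le_face y)).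
Qed.

Lemma face_box : box_morphism face.
Proof.
split; first exact: face_mono.
move=> y y' le_yy'; exists (face y), (face y'); split; first exact: face_mono.
exact: face_interval.
Qed.

End Face.

Section SurjectiveMorphism.

Variables (m n : nat) (phi : cube m -> cube n).
Hypotheses (phi_box : box_morphism phi) (phi_surj : forall y, exists x, phi x = y).

Lemma surj_box_morphism_top : phi cube_top = cube_top.
Proof.
have [v phi_v] := phi_surj cube_top.
by apply: cube_le_anti; rewrite ?cube_le_top // -phi_v; apply/phi_box.1/cube_le_top.
Qed.

Lemma exists_maximal_zero :
  exists2 x, phi x = cube_bot & forall i, ~~ x i -> phi (cube_setU1 x i) != cube_bot.
Proof.
have [v0 phi_v0] := phi_surj cube_bot.
have [|x /eqP phi_x x_max] := @arg_maxnP _ v0 (fun v => phi v == cube_bot)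
  (fun v => #|[pred i | v i]|); first exact/eqP.
exists x => // i xNi; apply/negP => /x_max.
by move/(leq_trans (card_cube_setU1 xNi)); rewrite ltnn.
Qed.

Variable x : cube m.
Hypotheses (phi_x : phi x = cube_bot)
  (x_max : forall i, ~~ x i -> phi (cube_setU1 x i) != cube_bot).

Lemma exists_atom_preimage j :
  exists2 i, ~~ x i & phi (cube_setU1 x i) = cube_atom j.
Proof.
have : cube_atom j \in phi @: cube_interval x cube_top.
  by rewrite box_morphism_interval ?cube_le_top // phi_x surj_box_morphism_top
    inE cube_bot_le cube_le_top.
case/imsetP => w; rewrite inE => /andP [le_xw _] phi_w.
case: (pickP [pred i | w i && ~~ x i]) => [i /andP [wi xNi] | wNx].
  exists i => //.
  have /cube_le_atom [phi_i | //] : cube_le (phi (cube_setU1 x i)) (cube_atom j).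
    by rewrite phi_w; apply/phi_box.1/cube_setU1_le.
  by have := x_max xNi; rewrite phi_i eqxx.
have w_x : w = x.
  apply: cube_le_anti => //; apply/cube_leP => t wt.
  by have := wNx t; rewrite /= wt => /negbFE.
by have /ffunP /(_ j) := phi_w; rewrite w_x phi_x !ffunE eqxx.
Qed.

Variable sg : 'I_n -> 'I_m.
Hypotheses (x_sg : forall j, ~~ x (sg j))
  (phi_sg : forall j, phi (cube_setU1 x (sg j)) = cube_atom j).

Lemma sg_inj : injective sg.
Proof. by move=> j k eq_jk; apply: cube_atom_inj; rewrite -!phi_sg eq_jk. Qed.

Lemma le_phi_face y : cube_le y (phi (face x sg y)).
Proof.
apply/cube_leP => j yj; rewrite -cube_atom_le -phi_sg.
by apply/phi_box.1/cube_setU1_le; rewrite ?le_face // (face_sg sg_inj x_sg).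
Qed.

Lemma phi_faceK : cancel (face x sg) phi.
Proof.
move=> y; apply: cube_le_card_interval_eq; first exact: le_phi_face.
have -> : cube_interval cube_bot (phi (face x sg y))
    = (phi \o face x sg) @: cube_interval cube_bot y.
  rewrite imset_comp (face_interval sg_inj x_sg) face_bot.
  by rewrite box_morphism_interval ?phi_x ?le_face.
exact: leq_imset_card.
Qed.

End SurjectiveMorphism.

Theorem mainTheorem10 (m n : nat) (phi : cube m -> cube n) :
  box_morphism phi ->
  (forall y : cube n, exists x : cube m, phi x = y) ->
  exists s : cube n -> cube m, box_morphism s /\ (forall y : cube n, phi (s y) = y).
Proof.
move=> phi_box phi_surj.
have [x phi_x x_max] := exists_maximal_zero phi_surj.
have [sg x_sg phi_sg] :=
  fin_all_exists2 (exists_atom_preimage phi_box phi_surj phi_x x_max).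
exists (face x sg); split; last exact: phi_faceK.
by apply: face_box => //; apply: sg_inj phi_sg.
Qed.
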